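(* Let $f:\mathbb{N}\to\{z\in\mathbb{C}:|z|\le1\}$ be a multiplicative function and $g:=1\ast f$. Then for any $x\ge1$ and $w\ge1$, $$\tilde M_g(x)-\tilde M_g(x/w)\ll\log(2w).$$
   Context: $(1\ast f)(n)=\sum_{d\mid n}f(d)$; $\tilde M_g(y):=\frac1y\sum_{n\le y}g(n)$. The implied constant is absolute. *)

From Stdlib Require Import Reals Arith List ZArith.
From Coquelicot Require Import Coquelicot.
Import ListNotations.
Open Scope R_scope.

Definition csum_1_to (N : nat) (F : nat -> C) : C :=
  fold_right Cplus (RtoC 0) (map F (seq 1 N)).

Definition multiplicative (f : nat -> C) : Prop :=
  f 1%nat = RtoC 1 /\
  forall m n : nat, (1 <= m)%nat -> (1 <= n)%nat -> Nat.gcd m n = 1%nat ->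
    f (m * n)%nat = Cmult (f m) (f n).

Definition one_conv (f : nat -> C) (n : nat) : C :=
  fold_right Cplus (RtoC 0)
    (map f (filter (fun d => Nat.eqb (n mod d) 0) (seq 1 n))).

(* floor of a real, truncated to nat (0 for y < 1). *)
Definition nfloor (y : R) : nat := Z.to_nat (Int_part y).

Definition Mtilde (g : nat -> C) (y : R) : C :=
  Cmult (RtoC (/ y)) (csum_1_to (nfloor y) g).

From Pilot Require Import Defs.
From Stdlib Require Import Reals Arith List ZArith Lra Lia.
From Coquelicot Require Import Coquelicot.
Open Scope R_scope.

(* Swapping the order of summation gives [sum_(n <= y) (1 * f)(n) = sum_(d <= y) f(d) floor(y/d)],
   so with [N = floor x] the difference is [sum_(d <= N) f(d) (floor(x/d) - w floor(x/(dw))) / x].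
   The numerator is at most [min(w, x/d)] in absolute value: the [d <= x/w] contribute at most
   [(x/w) (w/x) = 1] and the [x/w < d <= x] a harmonic sum [<= 1 + log w]. *)

Lemma sum_n_m_le_loc (a b : nat -> R) (n m : nat) :
  (forall k, (n <= k <= m)%nat -> a k <= b k) -> sum_n_m a n m <= sum_n_m b n m.
Proof.
  induction m as [|m IH]; intros Hab.
  - destruct n; [rewrite !sum_n_n; apply Hab; lia|].
    rewrite !sum_n_m_zero by lia. apply Rle_refl.
  - destruct (le_lt_dec n (S m)) as [Hn|Hn].
    + rewrite !sum_n_Sm by exact Hn.
      apply Rplus_le_compat; [apply IH; intros; apply Hab; lia | apply Hab; lia].
    + rewrite !sum_n_m_zero by exact Hn. apply Rle_refl.
Qed.

(* [Defs.nfloor] is qualified throughout: Coquelicot's own [nfloor] takes a positivity proof. *)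
Lemma nfloor_spec (y : R) : 0 <= y -> INR (Defs.nfloor y) <= y < INR (Defs.nfloor y) + 1.
Proof.
  intros Hy. unfold Defs.nfloor. destruct (base_Int_part y) as [Hlo Hhi].
  assert (Hpos : (0 <= Int_part y)%Z).
  { enough (-1 < Int_part y)%Z by lia. apply lt_IZR. simpl. lra. }
  rewrite INR_IZR_INZ, Z2Nat.id by exact Hpos. lra.
Qed.

Lemma nfloor_unique (y : R) (n : nat) : INR n <= y < INR n + 1 -> Defs.nfloor y = n.
Proof.
  intros Hn. unfold Defs.nfloor.
  rewrite <- (Int_part_spec y (Z.of_nat n)), Nat2Z.id; [reflexivity|].
  rewrite <- INR_IZR_INZ. lra.
Qed.

Lemma nfloor_le (y z : R) : 0 <= y <= z -> (Defs.nfloor y <= Defs.nfloor z)%nat.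
Proof.
  intros Hyz. pose proof (nfloor_spec y ltac:(lra)). pose proof (nfloor_spec z ltac:(lra)).
  enough (Defs.nfloor y < S (Defs.nfloor z))%nat by lia.
  apply INR_lt. rewrite S_INR. lra.
Qed.

Lemma nfloor_div_nat (y : R) (d : nat) : 0 <= y -> d <> 0%nat ->
  (Defs.nfloor y / d)%nat = Defs.nfloor (y / INR d).
Proof.
  intros Hy Hd. symmetry. apply nfloor_unique.
  pose proof (nfloor_spec y Hy).
  assert (Hlo : (Defs.nfloor y / d * d <= Defs.nfloor y)%nat)
    by (rewrite Nat.mul_comm; apply Nat.Div0.mul_div_le).
  assert (Hhi : (Defs.nfloor y < (S (Defs.nfloor y / d)) * d)%nat)
    by (rewrite Nat.mul_comm; apply Nat.mul_succ_div_gt; exact Hd).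
  apply le_INR in Hlo. apply le_INR in Hhi. rewrite mult_INR in Hlo, Hhi.
  rewrite !S_INR in Hhi.
  assert (0 < INR d) by (apply lt_0_INR; lia).
  split; [apply Rle_div_r | apply Rlt_div_l]; lra.
Qed.

Lemma nfloor_div_le_nfloor (x w : R) : 0 < x -> 1 <= w ->
  (Defs.nfloor (x / w) <= Defs.nfloor x)%nat.
Proof.
  intros Hx Hw. apply nfloor_le. split.
  - apply Rdiv_le_0_compat; lra.
  - apply Rle_div_l; nra.
Qed.

Lemma Rabs_nfloor_sub_scaled_le (y w : R) : 0 <= y -> 1 <= w ->
  Rabs (INR (Defs.nfloor y) - w * INR (Defs.nfloor (y / w))) <= Rmin w y.
Proof.
  intros Hy Hw. pose proof (nfloor_spec y Hy) as Ha.
  assert (Hyw : 0 <= y / w) by (apply Rdiv_le_0_compat; lra).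
  pose proof (nfloor_spec (y / w) Hyw) as [Hb1 Hb2].
  assert (Hwb : w * INR (Defs.nfloor (y / w)) <= y).
  { rewrite Rmult_comm. apply Rle_div_r; lra. }
  assert (Hwb' : y < w * (INR (Defs.nfloor (y / w)) + 1)).
  { rewrite Rmult_comm. apply Rlt_div_l; lra. }
  assert (0 <= w * INR (Defs.nfloor (y / w))) by (apply Rmult_le_pos; [lra | apply pos_INR]).
  pose proof (pos_INR (Defs.nfloor y)).
  apply Rmin_glb; apply Rabs_le; split; lra.
Qed.

Lemma fold_Cplus_map_seq (F : nat -> C) (m n : nat) :
  fold_right Cplus (RtoC 0) (map F (seq (S m) n)) = sum_n_m F (S m) (m + n).
Proof.
  revert m; induction n as [|n IH]; intros m; simpl.
  - rewrite Nat.add_0_r, sum_n_m_zero by lia. reflexivity.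
  - rewrite IH, (sum_Sn_m F (S m)) by lia.
    replace (m + S n)%nat with (S m + n)%nat by lia. reflexivity.
Qed.

Lemma csum_1_to_sum_n_m (F : nat -> C) (N : nat) : csum_1_to N F = sum_n_m F 1 N.
Proof. exact (fold_Cplus_map_seq F 0 N). Qed.

Lemma fold_Cplus_map_filter (F : nat -> C) (p : nat -> bool) (l : list nat) :
  fold_right Cplus (RtoC 0) (map F (filter p l)) =
  fold_right Cplus (RtoC 0) (map (fun d => if p d then F d else RtoC 0) l).
Proof.
  induction l as [|a l IH]; simpl; [reflexivity|].
  destruct (p a); simpl; rewrite IH; [reflexivity|ring].
Qed.

Lemma one_conv_sum_n_m (f : nat -> C) (n L : nat) : (1 <= n <= L)%nat ->
  one_conv f n = sum_n_m (fun d => if n mod d =? 0 then f d else RtoC 0) 1 L.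
Proof.
  intros Hn. unfold one_conv.
  rewrite fold_Cplus_map_filter, (fold_Cplus_map_seq _ 0 n).
  rewrite (sum_n_m_Chasles _ 1 n L) by lia.
  rewrite (sum_n_m_ext_loc _ (fun _ => zero) (S n) L), sum_n_m_const_zero.
  - rewrite plus_zero_r. reflexivity.
  - intros d Hd. rewrite Nat.mod_small by lia.
    destruct n; [lia|reflexivity].
Qed.

Lemma Nat_div_succ_l (N d : nat) : d <> 0%nat ->
  (S N / d = N / d + if S N mod d =? 0 then 1 else 0)%nat.
Proof.
  intros Hd.
  pose proof (Nat.div_mod (S N) d Hd). pose proof (Nat.div_mod N d Hd).
  pose proof (Nat.mod_upper_bound (S N) d Hd). pose proof (Nat.mod_upper_bound N d Hd).
  destruct (Nat.eqb_spec (S N mod d) 0); nia.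
Qed.

Lemma sum_n_m_one_conv (f : nat -> C) (N L : nat) : (N <= L)%nat ->
  sum_n_m (one_conv f) 1 N = sum_n_m (fun d => f d * INR (N / d))%C 1 L.
Proof.
  induction N as [|N IH]; intros HNL.
  - rewrite sum_n_m_zero by lia.
    rewrite (sum_n_m_ext _ (fun _ => zero)), sum_n_m_const_zero; [reflexivity|].
    intros d. replace (0 / d)%nat with 0%nat by (destruct d; reflexivity).
    simpl. rewrite Cmult_0_r. reflexivity.
  - rewrite sum_n_Sm, IH, (one_conv_sum_n_m f (S N) L), <- sum_n_m_plus by lia.
    apply sum_n_m_ext_loc. intros d Hd.
    rewrite (Nat_div_succ_l N d), plus_INR, RtoC_plus by lia.
    destruct (S N mod d =? 0); simpl; change plus with Cplus; ring.
Qed.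

Lemma inv_INR_succ_le_ln_diff (n : nat) : (1 <= n)%nat ->
  / INR (S n) <= ln (INR (S n)) - ln (INR n).
Proof.
  intros Hn. assert (1 <= INR n) by (apply (le_INR 1); exact Hn).
  rewrite S_INR.
  assert (Hexp := exp_ineq1_le (- / (INR n + 1))).
  replace (1 + - / (INR n + 1)) with (INR n / (INR n + 1)) in Hexp by (field; lra).
  apply ln_le in Hexp; [|apply Rdiv_lt_0_compat; lra].
  rewrite ln_exp, ln_div in Hexp by lra. lra.
Qed.

Lemma sum_n_m_inv_le_ln (m n : nat) : (1 <= m <= n)%nat ->
  sum_n_m (fun d => / INR d) (S m) n <= ln (INR n) - ln (INR m).
Proof.
  intros [Hm Hmn]. induction Hmn as [|n Hmn IH].
  - rewrite sum_n_m_zero by lia. change zero with 0. lra.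
  - rewrite sum_n_Sm by lia.
    pose proof (inv_INR_succ_le_ln_diff n ltac:(lia)). change plus with Rplus. lra.
Qed.

Lemma sum_n_m_inv_le_1_ln (m n : nat) (w : R) : (m <= n)%nat -> 1 <= w ->
  INR n <= w * INR (S m) -> sum_n_m (fun d => / INR d) (S m) n <= 1 + ln w.
Proof.
  intros Hmn Hw Hn.
  assert (0 <= ln w) by (rewrite <- ln_1; apply ln_le; lra).
  destruct (Nat.eq_dec m n) as [<-|Hlt].
  - rewrite sum_n_m_zero by lia. change zero with 0. lra.
  - rewrite sum_Sn_m by lia. change plus with Rplus.
    assert (1 <= INR (S m)) by (apply (le_INR 1); lia).
    assert (1 <= INR n) by (apply (le_INR 1); lia).
    assert (/ INR (S m) <= 1) by (rewrite <- Rinv_1; apply Rinv_le_contravar; lra).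
    assert (ln (INR n) - ln (INR (S m)) <= ln w).
    { rewrite <- ln_div by lra. apply ln_le.
      - apply Rdiv_lt_0_compat; lra.
      - apply Rle_div_l; lra. }
    pose proof (sum_n_m_inv_le_ln (S m) n ltac:(lia)). lra.
Qed.

Lemma Mtilde_one_conv (f : nat -> C) (y : R) (L : nat) :
  0 <= y -> (Defs.nfloor y <= L)%nat ->
  Mtilde (one_conv f) y =
  (RtoC (/ y) * sum_n_m (fun d => f d * INR (Defs.nfloor (y / INR d))) 1 L)%C.
Proof.
  intros Hy HL. unfold Mtilde.
  rewrite csum_1_to_sum_n_m, (sum_n_m_one_conv f _ L HL).
  f_equal. apply sum_n_m_ext_loc. intros d Hd.
  rewrite nfloor_div_nat by (exact Hy || lia). reflexivity.
Qed.

Lemma sum_n_m_sub_scal (a b : C) (u v : nat -> C) (n m : nat) :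
  (a * sum_n_m u n m - b * sum_n_m v n m)%C = sum_n_m (fun k => a * u k - b * v k)%C n m.
Proof.
  transitivity (a * sum_n_m u n m + - b * sum_n_m v n m)%C; [ring|].
  rewrite <- (sum_n_m_mult_l a u), <- (sum_n_m_mult_l (- b)%C v).
  rewrite <- (sum_n_m_plus (fun k => mult a (u k)) (fun k => mult (- b)%C (v k))).
  apply sum_n_m_ext. intros k. simpl. change plus with Cplus. change mult with Cmult. ring.
Qed.

Lemma sum_n_m_Rmin_le (x w : R) : 0 < x -> 1 <= w ->
  sum_n_m (fun d => / x * Rmin w (x / INR d)) 1 (Defs.nfloor x) <= 2 + ln w.
Proof.
  intros Hx Hw.
  set (N := Defs.nfloor x). set (M := Defs.nfloor (x / w)).
  assert (Hxw : 0 < x / w) by (apply Rdiv_lt_0_compat; lra).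
  assert (HMN : (M <= N)%nat) by (apply nfloor_div_le_nfloor; assumption).
  destruct (nfloor_spec x ltac:(lra)) as [HN _].
  destruct (nfloor_spec (x / w) ltac:(lra)) as [HM1 HM2]. fold N M in HN, HM1, HM2.
  rewrite (sum_n_m_Chasles _ 1 M N) by lia. change plus with Rplus.
  assert (Hlow : sum_n_m (fun d => / x * Rmin w (x / INR d)) 1 M <= 1).
  { eapply Rle_trans.
    - apply (sum_n_m_le _ (fun _ => / x * w)). intros d.
      apply Rmult_le_compat_l; [left; apply Rinv_0_lt_compat; lra | apply Rmin_l].
    - rewrite sum_n_m_const, Nat.sub_1_r. simpl pred.
      apply Rle_div_r in HM1; [|lra].
      apply (Rmult_le_reg_l x); [lra|]. field_simplify; lra. }
  assert (Hhigh : sum_n_m (fun d => / x * Rmin w (x / INR d)) (S M) N <= 1 + ln w).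
  { eapply Rle_trans; [apply (sum_n_m_le_loc _ (fun d => / INR d)) |].
    - intros d Hd. assert (0 < INR d) by (apply lt_0_INR; lia).
      replace (/ INR d) with (/ x * (x / INR d)) by (field; lra).
      apply Rmult_le_compat_l; [left; apply Rinv_0_lt_compat; lra | apply Rmin_r].
    - apply sum_n_m_inv_le_1_ln; [exact HMN | exact Hw |].
      rewrite S_INR. apply Rlt_div_l in HM2; lra. }
  lra.
Qed.

Lemma Mtilde_one_conv_sub (f : nat -> C) (x w : R) : 0 < x -> 1 <= w ->
  Cminus (Mtilde (one_conv f) x) (Mtilde (one_conv f) (x / w)) =
  sum_n_m (fun d => f d * RtoC (/ x * (INR (Defs.nfloor (x / INR d))
                                       - w * INR (Defs.nfloor (x / INR d / w)))))%C
    1 (Defs.nfloor x).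
Proof.
  intros Hx Hw.
  assert (Hxw : 0 < x / w) by (apply Rdiv_lt_0_compat; lra).
  rewrite (Mtilde_one_conv f x (Defs.nfloor x)) by (lra || lia).
  rewrite (Mtilde_one_conv f (x / w) (Defs.nfloor x)) by
    (lra || apply nfloor_div_le_nfloor; assumption).
  rewrite sum_n_m_sub_scal. apply sum_n_m_ext_loc. intros d Hd.
  assert (0 < INR d) by (apply lt_0_INR; lia).
  replace (x / w / INR d) with (x / INR d / w) by (field; lra).
  replace (/ (x / w)) with (w * / x) by (field; lra).
  rewrite !RtoC_mult, RtoC_minus, RtoC_mult. simpl. ring.
Qed.

Lemma Cmod_Mtilde_one_conv_sub_le (f : nat -> C) (x w : R) :
  (forall n : nat, (1 <= n)%nat -> Cmod (f n) <= 1) -> 0 < x -> 1 <= w ->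
  Cmod (Cminus (Mtilde (one_conv f) x) (Mtilde (one_conv f) (x / w))) <= 2 + ln w.
Proof.
  intros Hf Hx Hw. rewrite Mtilde_one_conv_sub by assumption.
  eapply Rle_trans; [apply (@norm_sum_n_m C_AbsRing C_NormedModule)|].
  eapply Rle_trans; [|exact (sum_n_m_Rmin_le x w Hx Hw)].
  apply sum_n_m_le_loc. intros d Hd.
  assert (0 < INR d) by (apply lt_0_INR; lia).
  assert (0 < / x) by (apply Rinv_0_lt_compat; exact Hx).
  change norm with Cmod. rewrite Cmod_mult, Cmod_R, Rabs_mult, (Rabs_pos_eq (/ x)) by lra.
  rewrite <- (Rmult_1_l (/ x * Rmin w (x / INR d))).
  apply Rmult_le_compat.
  - apply Cmod_ge_0.
  - apply Rmult_le_pos; [lra | apply Rabs_pos].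
  - apply Hf; lia.
  - apply Rmult_le_compat_l; [lra|].
    apply Rabs_nfloor_sub_scaled_le; [apply Rdiv_le_0_compat; lra | exact Hw].
Qed.

Lemma two_add_ln_le (w : R) : 1 <= w -> 2 + ln w <= 5 * ln (2 * w).
Proof.
  intros Hw. rewrite ln_mult by lra.
  assert (0 <= ln w) by (rewrite <- ln_1; apply ln_le; lra).
  pose proof ln_lt_2. lra.
Qed.

Theorem lemma4p2 :
  exists K : R,
    forall f : nat -> C,
      multiplicative f ->
      (forall n : nat, (1 <= n)%nat -> Cmod (f n) <= 1) ->
      forall x w : R, 1 <= x -> 1 <= w ->
        Cmod (Cminus (Mtilde (one_conv f) x) (Mtilde (one_conv f) (x / w)))
          <= K * ln (2 * w).
Proof.
  exists 5. intros f _ Hf x w Hx Hw.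
  eapply Rle_trans.
  - apply Cmod_Mtilde_one_conv_sub_le; [exact Hf | lra | exact Hw].
  - apply two_add_ln_le, Hw.
Qed.
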